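(* Let $G$ be an infinite group and $\vec m=(m_1,\dots,m_k)\in\mathbb{Z}^k$, $k\in\mathbb{N}$. Then (i) a subset $A\subseteq G$ is a Ramsey $\vec m$-product subset if and only if every infinite subset $X\subseteq G$ contains a countably infinite subset $Y$ such that $y_1^{m_1}y_2^{m_2}\cdots y_k^{m_k}\in A$ for all pairwise distinct $y_1,\dots,y_k\in Y$; (ii) the family $\varphi_{\vec m}$ of all Ramsey $\vec m$-product subsets of $G$ is a filter on $G$.
   Context: A subset $A$ of a group $G$ is a Ramsey $\vec m$-product subset, for $\vec m=(m_1,\dots,m_k)\in\mathbb{Z}^k$, if every infinite subset $X\subseteq G$ contains pairwise distinct $x_1,\dots,x_k\in X$ such that $x_{\sigma(1)}^{m_1}x_{\sigma(2)}^{m_2}\cdots x_{\sigma(k)}^{m_k}\in A$ for every permutation $\sigma\in S_k$. *)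

From Stdlib Require Import ZArith List Permutation.
Import ListNotations.
Set Implicit Arguments.

Record group_axioms (G : Type) (mul : G -> G -> G) (inv : G -> G) (one : G) : Prop := {
  mul_assoc : forall x y z, mul x (mul y z) = mul (mul x y) z;
  mul_1l : forall x, mul one x = x;
  mul_1r : forall x, mul x one = x;
  mul_Vl : forall x, mul (inv x) x = one;
  mul_Vr : forall x, mul x (inv x) = one
}.

Section Defs.
Variables (G : Type) (mul : G -> G -> G) (inv : G -> G) (one : G).

Fixpoint natpow (x : G) (n : nat) : G :=
  match n with O => one | S n' => mul x (natpow x n') end.

Definition zpow (x : G) (m : Z) : G :=
  match m with
  | Z0 => one
  | Zpos p => natpow x (Pos.to_nat p)
  | Zneg p => inv (natpow x (Pos.to_nat p))
  end.

Fixpoint prodpow (ms : list Z) (ys : list G) : G :=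
  match ms, ys with
  | m :: ms', y :: ys' => mul (zpow y m) (prodpow ms' ys')
  | _, _ => one
  end.

Definition infinite (X : G -> Prop) : Prop :=
  forall l : list G, exists x, X x /\ ~ In x l.

Definition countably_infinite (Y : G -> Prop) : Prop :=
  exists f : nat -> G, (forall i j, f i = f j -> i = j) /\
                       (forall y, Y y <-> exists n, f n = y).

(* A is a Ramsey m-product subset: every infinite X contains pairwise distinct
   x1..xk (k = length ms) with x_{s(1)}^{m1}...x_{s(k)}^{mk} in A for all
   permutations s (a permutation of the list xs). *)
Definition ramsey_product (ms : list Z) (A : G -> Prop) : Prop :=
  forall X : G -> Prop, infinite X ->
    exists xs : list G, length xs = length ms /\ NoDup xs /\
      (forall x, In x xs -> X x) /\
      (forall ys, Permutation xs ys -> A (prodpow ms ys)).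

Definition is_filter (F : (G -> Prop) -> Prop) : Prop :=
  F (fun _ => True) /\
  ~ F (fun _ => False) /\
  (forall A B : G -> Prop, F A -> (forall x, A x -> B x) -> F B) /\
  (forall A B : G -> Prop, F A -> F B -> F (fun x => A x /\ B x)).

End Defs.

(* Enumerate an infinite X injectively by f and colour
   each increasing k-list l of indices according to whether every rearrangement of f(l) has its
   m-product in A. Ramsey gives an infinite homogeneous set of indices; its f-image Y is infinite, so
   if A is a Ramsey m-product set then some k distinct points of Y have all rearranged products in A,
   which fixes the colour of Y, and then every k distinct points of Y do. The converse is immediate,
   and the filter property follows by applying the characterisation twice. *)
From Stdlib Require Import ZArith List.
From Stdlib Require Import Lia Sorted Permutation Classical ClassicalEpsilon.
Import ListNotations.

Lemma dependent_choice {A : Type} (Inv : A -> Prop) (R : A -> A -> Prop) (x0 : A) :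
  Inv x0 -> (forall x, Inv x -> exists y, Inv y /\ R x y) ->
  exists s : nat -> A, s 0 = x0 /\ forall n, Inv (s n) /\ R (s n) (s (S n)).
Proof.
  intros Hx0 Hstep.
  destruct (choice (fun x y => Inv x -> Inv y /\ R x y)) as [g Hg].
  { intro x. destruct (classic (Inv x)) as [Hx | Hx].
    - destruct (Hstep x Hx) as [y Hy]. exists y. auto.
    - exists x. tauto. }
  exists (fun n => Nat.iter n g x0). split; [reflexivity |].
  assert (Hinv : forall n, Inv (Nat.iter n g x0)).
  { induction n as [| n IH]; [exact Hx0 | exact (proj1 (Hg _ IH))]. }
  intro n. split; [apply Hinv | exact (proj2 (Hg _ (Hinv n)))].
Qed.

Section IncreasingSequence.

Variable a : nat -> nat.
Hypothesis a_succ : forall n, a n < a (S n).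

Lemma increasing_lt i j : i < j -> a i < a j.
Proof.
  induction j as [| j IH]; intro Hij; [lia |].
  specialize (a_succ j). destruct (Nat.eq_dec i j) as [-> | Hne]; [lia |].
  specialize (IH ltac:(lia)). lia.
Qed.

Lemma increasing_lt_reflect i j : a i < a j -> i < j.
Proof.
  intro H. destruct (Nat.lt_ge_cases i j) as [Hij | Hji]; [exact Hij |].
  destruct (Nat.eq_dec i j) as [-> | Hne]; [lia |].
  pose proof (increasing_lt j i ltac:(lia)). lia.
Qed.

Lemma increasing_inj i j : a i = a j -> i = j.
Proof.
  intro H. destruct (Nat.lt_trichotomy i j) as [Hij | [Hij | Hij]]; [| exact Hij |];
    pose proof (increasing_lt _ _ Hij); lia.
Qed.

Lemma increasing_ge_index n : n <= a n.
Proof. induction n as [| n IH]; [lia |]. specialize (a_succ n). lia. Qed.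

End IncreasingSequence.

Definition unbounded (S : nat -> Prop) : Prop := forall n, exists m, n <= m /\ S m.

Lemma bool_infinitely_often (c : nat -> bool) : exists b, unbounded (fun n => c n = b).
Proof.
  destruct (classic (unbounded (fun n => c n = true))) as [H | H]; [eauto |].
  exists false. apply not_all_ex_not in H as [n0 Hn0]. intro n.
  exists (Nat.max n n0). split; [lia |].
  destruct (c (Nat.max n n0)) eqn:E; [| reflexivity].
  exfalso. apply Hn0. exists (Nat.max n n0). split; [lia | exact E].
Qed.

Lemma unbounded_increasing_seq (T : nat -> Prop) :
  unbounded T -> exists e : nat -> nat, (forall n, e n < e (S n)) /\ forall n, T (e n).
Proof.
  intro HT. destruct (HT 0) as [x0 [_ Hx0]].
  destruct (dependent_choice T lt x0 Hx0) as [e [_ He]].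
  { intros x _. destruct (HT (S x)) as [y [Hxy Hy]]. exists y. split; [exact Hy | lia]. }
  exists e. split; intro n; apply He.
Qed.

(* A k-subset of nat is represented by the strictly increasing list of its elements. *)
Definition monochromatic (k : nat) (P : list nat -> Prop) (b : bool) (T : nat -> Prop) : Prop :=
  forall l, length l = k -> StronglySorted lt l -> Forall T l -> (P l <-> b = true).

Record pivot := { apex : nat; colour : bool; reservoir : nat -> Prop }.

Definition good_pivot (k : nat) (P : list nat -> Prop) (p : pivot) : Prop :=
  unbounded (reservoir p) /\ (forall x, reservoir p x -> apex p < x) /\
  monochromatic k (fun l => P (apex p :: l)) (colour p) (reservoir p).

Definition ramsey_property (k : nat) : Prop :=
  forall (P : list nat -> Prop) (S : nat -> Prop), unbounded S ->
    exists T b, (forall x, T x -> S x) /\ unbounded T /\ monochromatic k P b T.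

Lemma ramsey_property_0 : ramsey_property 0.
Proof.
  intros P S HS.
  assert (Hb : exists b, P [] <-> b = true).
  { destruct (classic (P [])); [exists true | exists false]; intuition discriminate. }
  destruct Hb as [b Hb]. exists S, b. split; [auto | split; [exact HS |]].
  intros [| x l] Hl _ _; [exact Hb | discriminate].
Qed.

Lemma good_pivot_exists k P U :
  ramsey_property k -> unbounded U ->
  exists p, U (apex p) /\ (forall x, reservoir p x -> U x) /\ good_pivot k P p.
Proof.
  intros IH HU. destruct (HU 0) as [a [_ Ha]].
  destruct (IH (fun l => P (a :: l)) (fun x => U x /\ a < x)) as [V [c [HVU [HV Hmono]]]].
  { intro n. destruct (HU (Nat.max n (S a))) as [m [Hm HUm]]. exists m. split; [lia | split; [exact HUm | lia]]. }
  exists {| apex := a; colour := c; reservoir := V |}; simpl.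
  split; [exact Ha | split; [intros x Hx; apply HVU, Hx |]].
  split; [exact HV | split; [intros x Hx; apply HVU, Hx | exact Hmono]].
Qed.

Section PivotChain.

Variables (k : nat) (P : list nat -> Prop) (ps : nat -> pivot).
Hypothesis ps_good : forall n, good_pivot k P (ps n).
Hypothesis ps_next : forall n,
  reservoir (ps n) (apex (ps (S n))) /\ (forall x, reservoir (ps (S n)) x -> reservoir (ps n) x).

Lemma reservoir_antitone i d x : reservoir (ps (d + i)) x -> reservoir (ps i) x.
Proof. induction d as [| d IH]; simpl; [auto |]. intro Hx. apply IH, (ps_next (d + i)), Hx. Qed.

Lemma apex_in_reservoir i j : i < j -> reservoir (ps i) (apex (ps j)).
Proof.
  intro Hij. replace j with (S (j - S i + i)) by lia.
  apply (reservoir_antitone i (j - S i)). exact (proj1 (ps_next _)).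
Qed.

Lemma apex_succ n : apex (ps n) < apex (ps (S n)).
Proof. apply (ps_good n), (proj1 (ps_next n)). Qed.

(* Past its first apex, a list of apexes lies in the reservoir of that first pivot. *)
Lemma pivot_chain_monochromatic b :
  monochromatic (S k) P b (fun x => exists i, apex (ps i) = x /\ colour (ps i) = b).
Proof.
  intros [| x l] Hlen Hsorted HT; [discriminate |].
  injection Hlen as Hlen. apply StronglySorted_inv in Hsorted as [Hsorted Hx].
  apply Forall_inv in HT as HTx. destruct HTx as [i [<- Hci]]. rewrite <- Hci.
  apply (ps_good i); [exact Hlen | exact Hsorted |].
  apply Forall_forall. intros y Hy.
  destruct (proj1 (Forall_forall _ _) (Forall_inv_tail HT) y Hy) as [j [<- _]].
  apply apex_in_reservoir, (increasing_lt_reflect _ apex_succ).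
  exact (proj1 (Forall_forall _ _) Hx _ Hy).
Qed.

End PivotChain.

Lemma ramsey_property_S k : ramsey_property k -> ramsey_property (S k).
Proof.
  intros IH P S HS.
  destruct (good_pivot_exists k P S IH HS) as [p0 [Hp0S [Hp0sub Hp0]]].
  destruct (dependent_choice (good_pivot k P)
              (fun p q => reservoir p (apex q) /\ (forall x, reservoir q x -> reservoir p x)) p0 Hp0)
    as [ps [Hps0 Hps]].
  { intros p Hp. destruct (good_pivot_exists k P _ IH (proj1 Hp)) as [q [Hq1 [Hq2 Hq]]]. eauto. }
  assert (Hgood : forall n, good_pivot k P (ps n)) by apply Hps.
  assert (Hnext := fun n => proj2 (Hps n)).
  destruct (bool_infinitely_often (fun n => colour (ps n))) as [b Hb].
  exists (fun x => exists i, apex (ps i) = x /\ colour (ps i) = b), b.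
  split; [| split].
  - intros x [[| i] [<- _]]; rewrite ?Hps0; [exact Hp0S |].
    apply Hp0sub. rewrite <- Hps0. apply (apex_in_reservoir _ Hnext). lia.
  - intro n. destruct (Hb n) as [m [Hm Hcm]]. exists (apex (ps m)).
    split; [| eauto].
    pose proof (increasing_ge_index _ (apex_succ k P ps Hgood Hnext) m). lia.
  - apply (pivot_chain_monochromatic k P ps Hgood Hnext).
Qed.

Theorem infinite_ramsey k : ramsey_property k.
Proof. induction k; [exact ramsey_property_0 | exact (ramsey_property_S k IHk)]. Qed.

Lemma StronglySorted_lt_insert (x : nat) s :
  StronglySorted lt s -> ~ In x s -> exists s', StronglySorted lt s' /\ Permutation (x :: s) s'.
Proof.
  induction s as [| y s IH]; intros Hs Hx.
  - exists [x]. split; [repeat constructor | reflexivity].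
  - apply StronglySorted_inv in Hs as [Hs Hy].
    destruct (Nat.lt_ge_cases x y) as [Hxy | Hyx].
    + exists (x :: y :: s). split; [| reflexivity].
      constructor; [constructor; assumption |].
      constructor; [exact Hxy |]. eapply Forall_impl; [| exact Hy]. simpl. lia.
    + destruct IH as [s' [Hs' Hperm]]; [exact Hs | intro; apply Hx; right; assumption |].
      exists (y :: s'). split.
      * constructor; [exact Hs' |]. apply (Permutation_Forall Hperm). constructor; [| exact Hy].
        assert (x <> y) by (intro; apply Hx; left; auto). lia.
      * rewrite perm_swap. apply perm_skip, Hperm.
Qed.

Lemma NoDup_StronglySorted_lt (l : list nat) :
  NoDup l -> exists s, StronglySorted lt s /\ Permutation l s.
Proof.
  induction 1 as [| x l Hx _ [s [Hs Hperm]]]; [exists []; split; constructor |].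
  destruct (StronglySorted_lt_insert x s Hs) as [s' [Hs' Hperm']].
  { intro H. apply Hx, (Permutation_in _ (Permutation_sym Hperm) H). }
  exists s'. split; [exact Hs' | rewrite Hperm; exact Hperm'].
Qed.

Lemma list_preimage {A B : Type} (f : A -> B) (Q : A -> Prop) (ys : list B) :
  (forall y, In y ys -> exists x, Q x /\ f x = y) -> exists l, Forall Q l /\ map f l = ys.
Proof.
  induction ys as [| y ys IH]; intro Hys; [exists []; split; constructor |].
  destruct (Hys y (or_introl eq_refl)) as [x [Hx <-]].
  destruct IH as [l [Hl <-]]; [intros z Hz; apply Hys; right; exact Hz |].
  exists (x :: l). split; [constructor; assumption | reflexivity].
Qed.

Lemma NoDup_sorted_preimage {B : Type} (f : nat -> B) (Q : nat -> Prop) (ys : list B) :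
  NoDup ys -> (forall y, In y ys -> exists x, Q x /\ f x = y) ->
  exists l, length l = length ys /\ StronglySorted lt l /\ Forall Q l /\ Permutation (map f l) ys.
Proof.
  intros Hnd Hys. destruct (list_preimage f Q ys Hys) as [l0 [HQ <-]].
  destruct (NoDup_StronglySorted_lt l0 (NoDup_map_inv f l0 Hnd)) as [l [Hl Hperm]].
  exists l. split; [| split; [exact Hl | split]].
  - rewrite length_map. symmetry. apply Permutation_length, Hperm.
  - apply (Permutation_Forall Hperm), HQ.
  - apply Permutation_map, Permutation_sym, Hperm.
Qed.

Section InfiniteSubsets.

Context {G : Type}.

Lemma infinite_NoDup_list (X : G -> Prop) k :
  infinite X -> exists xs, length xs = k /\ NoDup xs /\ forall x, In x xs -> X x.
Proof.
  intro HX. induction k as [| k [xs [Hlen [Hnd Hxs]]]].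
  { exists []. split; [reflexivity | split; [constructor | intros x []]]. }
  destruct (HX xs) as [x [Hx Hnotin]]. exists (x :: xs).
  split; [simpl; congruence | split; [constructor; assumption |]].
  intros y [<- | Hy]; auto.
Qed.

Lemma infinite_injective_seq (X : G -> Prop) :
  infinite X -> exists f : nat -> G, (forall i j, f i = f j -> i = j) /\ forall n, X (f n).
Proof.
  intro HX. destruct (HX []) as [x0 [Hx0 _]].
  (* A state pairs the newest point with the list of all earlier points. *)
  destruct (dependent_choice (fun st : G * list G => X (fst st) /\ ~ In (fst st) (snd st))
              (fun st st' => snd st' = fst st :: snd st) (x0, []))
    as [s [_ Hs]].
  { split; [exact Hx0 | intros []]. }
  { intros [x l] _. destruct (HX (x :: l)) as [y Hy]. exists (y, x :: l). auto. }
  set (f := fun n => fst (s n)).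
  assert (Hearlier : forall i j, i < j -> In (f i) (snd (s j))).
  { intros i j Hij. induction j as [| j IH]; [lia |].
    rewrite (proj2 (Hs j)). destruct (Nat.eq_dec i j) as [-> | Hne]; [left | right; apply IH; lia]; auto. }
  exists f. split; [| intro n; apply Hs].
  intros i j Hij. destruct (Nat.lt_trichotomy i j) as [H | [H | H]]; [| exact H |]; exfalso.
  - apply (proj2 (proj1 (Hs j))). fold (f j). rewrite <- Hij. exact (Hearlier i j H).
  - apply (proj2 (proj1 (Hs i))). fold (f i). rewrite Hij. exact (Hearlier j i H).
Qed.

Lemma countably_infinite_infinite (Y : G -> Prop) : countably_infinite Y -> infinite Y.
Proof.
  intros [f [Hf HY]] l. apply NNPP. intro Hno.
  assert (Hall : forall n, In (f n) l).
  { intro n. apply NNPP. intro Hn. apply Hno. exists (f n). split; [apply HY; eauto | exact Hn]. }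
  assert (Hnd : NoDup (map f (seq 0 (S (length l))))).
  { apply FinFun.Injective_map_NoDup; [intros x y; apply Hf | apply seq_NoDup]. }
  assert (Hincl : incl (map f (seq 0 (S (length l)))) l).
  { intros x Hx. apply in_map_iff in Hx as [n [<- _]]. apply Hall. }
  pose proof (NoDup_incl_length Hnd Hincl) as Hle. rewrite length_map, length_seq in Hle. lia.
Qed.

End InfiniteSubsets.

Section RamseyProduct.

Variables (G : Type) (mul : G -> G -> G) (inv : G -> G) (one : G) (ms : list Z).

Definition countable_ramsey_product (A : G -> Prop) : Prop :=
  forall X : G -> Prop, infinite X ->
    exists Y : G -> Prop, (forall y, Y y -> X y) /\ countably_infinite Y /\
      (forall ys : list G, length ys = length ms -> NoDup ys ->
         (forall y, In y ys -> Y y) -> A (prodpow mul inv one ms ys)).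

Lemma countable_ramsey_product_ramsey_product A :
  countable_ramsey_product A -> ramsey_product mul inv one ms A.
Proof.
  intros HA X HX. destruct (HA X HX) as [Y [HYX [HYc HYA]]].
  destruct (infinite_NoDup_list Y (length ms) (countably_infinite_infinite Y HYc))
    as [xs [Hlen [Hnd Hxs]]].
  exists xs. split; [exact Hlen | split; [exact Hnd | split; [auto |]]].
  intros ys Hperm. apply HYA.
  - rewrite <- (Permutation_length Hperm). exact Hlen.
  - exact (Permutation_NoDup Hperm Hnd).
  - intros y Hy. apply Hxs, (Permutation_in _ (Permutation_sym Hperm) Hy).
Qed.

Lemma ramsey_product_countable_ramsey_product A :
  ramsey_product mul inv one ms A -> countable_ramsey_product A.
Proof.
  intros HA X HX.
  destruct (infinite_injective_seq X HX) as [f [Hf HfX]].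
  set (P := fun l => forall ys, Permutation (map f l) ys -> A (prodpow mul inv one ms ys)).
  destruct (infinite_ramsey (length ms) P (fun _ => True)) as [T [b [_ [HT Hmono]]]].
  { intro n. exists n. auto. }
  destruct (unbounded_increasing_seq T HT) as [e [He HeT]].
  set (Y := fun y => exists n, f (e n) = y).
  assert (HYc : countably_infinite Y).
  { exists (fun n => f (e n)). split; [| reflexivity].
    intros i j Hij. apply (increasing_inj e He), Hf, Hij. }
  assert (Hpre : forall ys, NoDup ys -> (forall y, In y ys -> Y y) ->
            exists l, length l = length ys /\ StronglySorted lt l /\ Forall T l /\
                      Permutation (map f l) ys).
  { intros ys Hnd Hys. apply NoDup_sorted_preimage; [exact Hnd |].
    intros y Hy. destruct (Hys y Hy) as [n <-]. eauto. }
  (* The colour of T is forced by one k-list of Y with all rearranged products in A. *)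
  assert (Hb : b = true).
  { destruct (HA Y (countably_infinite_infinite Y HYc)) as [xs [Hlen [Hnd [Hxs HxsA]]]].
    destruct (Hpre xs Hnd Hxs) as [l [Hl [Hsorted [HlT Hperm]]]].
    apply (Hmono l); [congruence | exact Hsorted | exact HlT |].
    intros ys Hys. apply HxsA. rewrite <- Hperm. exact Hys. }
  exists Y. split; [intros y [n <-]; apply HfX | split; [exact HYc |]].
  intros ys Hlen Hnd Hys. destruct (Hpre ys Hnd Hys) as [l [Hl [Hsorted [HlT Hperm]]]].
  apply (Hmono l); [congruence | exact Hsorted | exact HlT | exact Hb | exact Hperm].
Qed.

Lemma ramsey_product_iff A : ramsey_product mul inv one ms A <-> countable_ramsey_product A.
Proof.
  split; [apply ramsey_product_countable_ramsey_product |
          apply countable_ramsey_product_ramsey_product].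
Qed.

Lemma ramsey_product_meet A B :
  ramsey_product mul inv one ms A -> ramsey_product mul inv one ms B ->
  ramsey_product mul inv one ms (fun x => A x /\ B x).
Proof.
  rewrite !ramsey_product_iff. intros HA HB X HX.
  destruct (HA X HX) as [Y [HYX [HYc HYA]]].
  destruct (HB Y (countably_infinite_infinite Y HYc)) as [Z [HZY [HZc HZB]]].
  exists Z. split; [auto | split; [exact HZc |]].
  intros ys Hlen Hnd Hys. split; [apply HYA | apply HZB]; auto.
Qed.

End RamseyProduct.

Theorem theorem5p1 (G : Type) (mul : G -> G -> G) (inv : G -> G) (one : G)
  (HG : group_axioms mul inv one) (Hinf : infinite (fun _ : G => True))
  (ms : list Z) :
  (forall A : G -> Prop,
     ramsey_product mul inv one ms A <->
     (forall X : G -> Prop, infinite X ->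
        exists Y : G -> Prop, (forall y, Y y -> X y) /\ countably_infinite Y /\
          (forall ys : list G, length ys = length ms -> NoDup ys ->
             (forall y, In y ys -> Y y) -> A (prodpow mul inv one ms ys))))
  /\ is_filter (ramsey_product mul inv one ms).
Proof.
  split; [exact (ramsey_product_iff G mul inv one ms) |].
  split; [| split; [| split]].
  - intros X HX. destruct (infinite_NoDup_list X (length ms) HX) as [xs [Hlen [Hnd Hxs]]].
    exists xs. auto.
  - intro Hfalse. destruct (Hfalse _ Hinf) as [xs [_ [_ [_ Hperm]]]].
    exact (Hperm xs (Permutation_refl xs)).
  - intros A B HA HAB X HX. destruct (HA X HX) as [xs [Hlen [Hnd [Hxs HxsA]]]].
    exists xs. split; [| split; [| split]]; auto.
  - exact (ramsey_product_meet G mul inv one ms).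
Qed.
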